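(* For $n=4$ (so $d_4=\frac{\sqrt5}{3}$), $$\lim_{h\to\sqrt5/3}\tilde B_4(h)=\frac{5\left(2\sqrt3+\ln(26-15\sqrt3)\right)}{4\ln(2-\sqrt3)},$$ and consequently $c_0(h)=\frac{1}{1-\tilde B_4(h)}$ satisfies $$\lim_{h\to\sqrt5/3}c_0(h)=\frac{1}{1-\frac{5\left(2\sqrt3+\ln(26-15\sqrt3)\right)}{4\ln(2-\sqrt3)}} .$$
   Context: For $n=4$: $W(u)=\frac{u^2}{2}-\frac{u^6}{30}$, $H(u,v)=\frac{v^2}{2}+W(u)$; for $h\in(0,\frac{\sqrt5}{3})$, $\Gamma_h$ is the periodic orbit in $\{H=h\}$ surrounding the origin of $u'=v$, $v'=-u+\frac15u^5$, oriented clockwise; $\tilde B_4(h)=\oint_{\Gamma_h}u^4v\,du\big/\oint_{\Gamma_h}v\,du$. *)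

From Stdlib Require Import Reals Lra.
From Coquelicot Require Import Coquelicot.
Open Scope R_scope.

Definition W (u : R) : R := u ^ 2 / 2 - u ^ 6 / 30.
Definition H (u v : R) : R := v ^ 2 / 2 + W u.

(* d_4 = sqrt 5 / 3 = W(5^(1/4)), the energy of the saddles (+-5^(1/4), 0). *)
Definition d4 : R := sqrt 5 / 3.
Definition u_saddle : R := sqrt (sqrt 5).

(* Half-width of the oval Gamma_h: the positive turning point a(h), i.e. the
   root of W(u) = h in (0, 5^(1/4)) (W is increasing there), defined as the
   supremum of {u in [0, 5^(1/4)] | W u <= h}. *)
Definition amp (h : R) : R :=
  real (Lub_Rbar (fun u => 0 <= u <= u_saddle /\ W u <= h)).

(* Gamma_h = {H = h} /\ {|u| <= a(h)}, the oval around the origin, oriented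
   clockwise: the upper arc v = +sqrt(2(h - W u)) is run with u increasing from
   -a(h) to a(h), the lower arc v = -sqrt(2(h - W u)) with u decreasing from
   a(h) to -a(h). *)
Definition vplus (h u : R) : R := sqrt (2 * (h - W u)).

Definition oint_du (P : R -> R -> R) (h : R) : R :=
  RInt (fun u => P u (vplus h u)) (- amp h) (amp h)
  + RInt (fun u => P u (- vplus h u)) (amp h) (- amp h).

Definition Btilde4 (h : R) : R :=
  oint_du (fun u v => u ^ 4 * v) h / oint_du (fun u v => v) h.

Definition c0 (h : R) : R := 1 / (1 - Btilde4 h).

Definition B4_limit : R :=
  5 * (2 * sqrt 3 + ln (26 - 15 * sqrt 3)) / (4 * ln (2 - sqrt 3)).

From Stdlib Require Import Reals Lra Psatz.
From Coquelicot Require Import Coquelicot.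
Open Scope R_scope.

(* Since [sqrt] vanishes on negative numbers, every oval integral of a form odd
   in [v] equals twice the integral of [P u (sqrt (2 (h - W u)))] over the whole
   well [-5^(1/4), 5^(1/4)], whatever the turning points are.  Such integrals
   depend continuously on [h] because the square root is 1/2-Hoelder, so the
   limit is their value at [h = d4].  On that separatrix level
   [30 (d4 - W u) = (sqrt 5 - u^2)^2 (u^2 + 2 sqrt 5)], and the moments
   have explicit primitives built from [sqrt (u^2 + 2 sqrt 5)] and
   [ln (u + sqrt (u^2 + 2 sqrt 5))]; they give
   [B4 = 15/4 - 5 sqrt 3 / (2 ln (2 + sqrt 3))], which is not 1. *)

Lemma sqrt5_pos : 0 < sqrt 5.
Proof. apply sqrt_lt_R0; lra. Qed.

Lemma sqrt5_sqr : sqrt 5 * sqrt 5 = 5.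
Proof. apply sqrt_sqrt; lra. Qed.

Lemma u_saddle_pos : 0 < u_saddle.
Proof. apply sqrt_lt_R0, sqrt5_pos. Qed.

Lemma u_saddle_sqr : u_saddle * u_saddle = sqrt 5.
Proof. apply sqrt_sqrt; left; apply sqrt5_pos. Qed.

Lemma W_opp u : W (- u) = W u.
Proof. unfold W; field. Qed.

Lemma amp_spec h : 0 <= h ->
  0 <= amp h <= u_saddle /\ (forall u, amp h < u <= u_saddle -> h < W u).
Proof.
  intros Hh.
  set (E := fun u => 0 <= u <= u_saddle /\ W u <= h).
  assert (E0 : E 0) by (split; [pose proof u_saddle_pos | unfold W]; lra).
  destruct (Lub_Rbar_correct E) as [Hub Hlub].
  assert (Hle : Rbar_le (Lub_Rbar E) u_saddle) by (apply Hlub; intros x [Hx _]; simpl; lra).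
  pose proof (Hub 0 E0) as H0.
  unfold amp; fold E.
  destruct (Lub_Rbar E) as [l| |]; simpl in Hle, H0 |- *; try contradiction.
  split; [lra|].
  intros u Hu; destruct (Rlt_or_le h (W u)) as [|Hw]; [assumption|].
  assert (Eu : E u) by (split; [lra | assumption]).
  pose proof (Hub u Eu); simpl in *; lra.
Qed.

Lemma RInt_eq0 (f : R -> R) a b : a <= b -> (forall u, a < u < b -> f u = 0) ->
  RInt f a b = 0.
Proof.
  intros Hab Hf.
  rewrite (RInt_ext (V := R_CompleteNormedModule) f (fun _ => 0)), RInt_const.
  - apply Rmult_0_r.
  - intros x Hx; apply Hf; rewrite Rmin_left, Rmax_right in Hx; lra.
Qed.

Lemma vplus_eq0 h u : h < W u -> vplus h u = 0.
Proof. intros Hu; apply sqrt_neg_0; lra. Qed.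

Lemma oint_du_odd (P : R -> R -> R) h : 0 <= h ->
  (forall u v, P u (- v) = - P u v) ->
  (forall x, continuous (fun u => P u (vplus h u)) x) ->
  oint_du P h = 2 * RInt (fun u => P u (vplus h u)) (- u_saddle) u_saddle.
Proof.
  intros Hh HP Hcont.
  set (f := fun u => P u (vplus h u)).
  assert (Hf : forall a b, ex_RInt f a b)
    by (intros; apply (ex_RInt_continuous (V := R_CompleteNormedModule)); auto).
  assert (HP0 : forall u, P u 0 = 0)
    by (intro u; pose proof (HP u 0) as E; rewrite Ropp_0 in E; lra).
  destruct (amp_spec h Hh) as [HA Hout]; set (A := amp h) in *.
  assert (Hlower : RInt (fun u => P u (- vplus h u)) A (- A) = RInt f (- A) A).
  { rewrite <- (opp_RInt_swap f A (- A)), <- (RInt_opp f) by apply Hf.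
    apply (RInt_ext (V := R_CompleteNormedModule)); intros x _; apply HP. }
  assert (Hright : RInt f A u_saddle = 0).
  { apply RInt_eq0; [lra|]; intros u Hu; unfold f.
    rewrite vplus_eq0 by (apply Hout; lra); apply HP0. }
  assert (Hleft : RInt f (- u_saddle) (- A) = 0).
  { apply RInt_eq0; [lra|]; intros u Hu; unfold f.
    rewrite vplus_eq0 by (rewrite <- W_opp; apply Hout; lra); apply HP0. }
  pose proof (RInt_Chasles (V := R_CompleteNormedModule) f (- u_saddle) (- A) u_saddle
                (Hf _ _) (Hf _ _)) as C1.
  pose proof (RInt_Chasles (V := R_CompleteNormedModule) f (- A) A u_saddle
                (Hf _ _) (Hf _ _)) as C2.
  change plus with Rplus in C1, C2.
  unfold oint_du; fold A; rewrite Hlower; fold f; lra.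
Qed.

Lemma sqrt_sub_le x y : x <= y -> sqrt y - sqrt x <= sqrt (y - x).
Proof.
  intros Hxy; destruct (Rle_or_lt x 0) as [Hx|Hx].
  - rewrite (sqrt_neg_0 x Hx); pose proof (sqrt_le_1_alt y (y - x)); lra.
  - pose proof (sqrt_sqrt x ltac:(lra)); pose proof (sqrt_sqrt (y - x) ltac:(lra)).
    pose proof (sqrt_pos x); pose proof (sqrt_pos (y - x)).
    assert (Hy : sqrt y <= sqrt ((sqrt x + sqrt (y - x)) ^ 2)) by (apply sqrt_le_1_alt; nra).
    rewrite sqrt_pow2 in Hy; lra.
Qed.

Lemma Rabs_sqrt_sub_le x y : Rabs (sqrt x - sqrt y) <= sqrt (Rabs (x - y)).
Proof.
  destruct (Rle_or_lt x y) as [Hxy|Hxy].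
  - pose proof (sqrt_le_1_alt x y Hxy).
    rewrite (Rabs_minus_sym x), (Rabs_minus_sym (sqrt x)), !Rabs_right by lra.
    apply sqrt_sub_le; lra.
  - pose proof (sqrt_le_1_alt y x ltac:(lra)).
    rewrite !Rabs_right by lra.
    apply sqrt_sub_le; lra.
Qed.

Lemma Rabs_vplus_sub_le h h' u :
  Rabs (vplus h u - vplus h' u) <= sqrt (2 * Rabs (h - h')).
Proof.
  unfold vplus; replace (2 * Rabs (h - h')) with (Rabs (2 * (h - W u) - 2 * (h' - W u))).
  - apply Rabs_sqrt_sub_le.
  - replace (2 * (h - W u) - 2 * (h' - W u)) with (2 * (h - h')) by ring.
    rewrite Rabs_mult, Rabs_right; lra.
Qed.

Lemma continuous_vplus h x : continuous (vplus h) x.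
Proof.
  apply continuous_sqrt_comp, (ex_derive_continuous (fun x => 2 * (h - W x))).
  unfold W; auto_derive; auto.
Qed.

Lemma ex_RInt_mul_vplus (g : R -> R) h a b : (forall x, continuous g x) ->
  ex_RInt (fun u => g u * vplus h u) a b.
Proof.
  intros Hg; apply (ex_RInt_continuous (V := R_CompleteNormedModule)); intros x _.
  apply (continuous_mult g (vplus h)); [apply Hg | apply continuous_vplus].
Qed.

Lemma continuous_RInt_mul_vplus (g : R -> R) a b M h0 : a <= b ->
  (forall x, continuous g x) -> (forall u, a <= u <= b -> Rabs (g u) <= M) ->
  continuous (fun h => RInt (fun u => g u * vplus h u) a b) h0.
Proof.
  intros Hab Hg HM.
  assert (HM0 : 0 <= M) by (pose proof (HM a ltac:(lra)); pose proof (Rabs_pos (g a)); lra).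
  set (K := (b - a) * M + 1).
  assert (HK : 0 < K) by (unfold K; nra).
  apply filterlim_locally; intros eps.
  pose proof (cond_pos eps) as He.
  assert (Hd : 0 < (eps / K) ^ 2 / 2) by (apply Rdiv_lt_0_compat; [apply pow_lt, Rdiv_lt_0_compat|]; lra).
  exists (mkposreal _ Hd); intros h Hh.
  change (Rabs (h - h0) < (eps / K) ^ 2 / 2) in Hh.
  change (Rabs (RInt (fun u => g u * vplus h u) a b - RInt (fun u => g u * vplus h0 u) a b) < eps).
  set (t := sqrt (2 * Rabs (h - h0))).
  assert (Ht : 0 <= t < eps / K).
  { split; [apply sqrt_pos|].
    rewrite <- (sqrt_pow2 (eps / K)) by (left; apply Rdiv_lt_0_compat; lra).
    apply sqrt_lt_1_alt; pose proof (Rabs_pos (h - h0)); lra. }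
  assert (Hbound : Rabs (RInt (fun u => g u * vplus h u - g u * vplus h0 u) a b) <= (b - a) * (M * t)).
  { apply abs_RInt_le_const; [assumption| |].
    - apply (ex_RInt_minus (V := R_CompleteNormedModule)); apply ex_RInt_mul_vplus, Hg.
    - intros u Hu; rewrite <- Rmult_minus_distr_l, Rabs_mult.
      apply Rmult_le_compat; [apply Rabs_pos | apply Rabs_pos | auto | apply Rabs_vplus_sub_le]. }
  rewrite (RInt_minus (V := R_CompleteNormedModule)) in Hbound by (apply ex_RInt_mul_vplus, Hg).
  change minus with Rminus in Hbound.
  assert (K * t < eps).
  { replace (pos eps) with (K * (eps / K)) by (field; lra).
    apply Rmult_lt_compat_l; lra. }
  unfold K in *; nra.
Qed.

Definition arc_moment (k : nat) (h : R) : R :=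
  RInt (fun u => u ^ k * vplus h u) (- u_saddle) u_saddle.

Lemma continuous_pow k x : continuous (fun u : R => u ^ k) x.
Proof. apply (ex_derive_continuous (fun u => u ^ k)); auto_derive; auto. Qed.

Lemma oint_du_moment k h : 0 <= h ->
  oint_du (fun u v => u ^ k * v) h = 2 * arc_moment k h.
Proof.
  intros Hh; apply oint_du_odd; [assumption | intros; ring |].
  intros x; apply (continuous_mult (fun u => u ^ k) (vplus h));
    [apply continuous_pow | apply continuous_vplus].
Qed.

Lemma Btilde4_moments h : 0 <= h -> Btilde4 h = arc_moment 4 h / arc_moment 0 h.
Proof.
  intros Hh; unfold Btilde4; rewrite oint_du_moment by assumption.
  replace (oint_du (fun u v => v) h) with (2 * arc_moment 0 h).
  - unfold Rdiv; rewrite Rinv_mult.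
    replace (2 * arc_moment 4 h * (/ 2 * / arc_moment 0 h))
      with ((2 * / 2) * (arc_moment 4 h * / arc_moment 0 h)) by ring.
    rewrite Rinv_r by lra; ring.
  - rewrite <- oint_du_moment by assumption.
    unfold oint_du; f_equal; apply (RInt_ext (V := R_CompleteNormedModule));
      intros; simpl; ring.
Qed.

Lemma continuous_arc_moment k h0 : continuous (arc_moment k) h0.
Proof.
  pose proof u_saddle_pos.
  apply (continuous_RInt_mul_vplus _ _ _ (u_saddle ^ k)); [lra | apply continuous_pow |].
  intros u Hu; rewrite <- RPow_abs; apply pow_incr; split; [apply Rabs_pos|].
  apply Rabs_le; lra.
Qed.

Lemma sqrt15_pos : 0 < sqrt 15.
Proof. apply sqrt_lt_R0; lra. Qed.

Lemma sqrt15_sqr : sqrt 15 * sqrt 15 = 15.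
Proof. apply sqrt_sqrt; lra. Qed.

Lemma d4_sub_W u : 30 * (d4 - W u) = (sqrt 5 - u ^ 2) ^ 2 * (u ^ 2 + 2 * sqrt 5).
Proof.
  replace ((sqrt 5 - u ^ 2) ^ 2 * (u ^ 2 + 2 * sqrt 5))
    with (u ^ 6 - 3 * (sqrt 5 * sqrt 5) * u ^ 2 + 2 * (sqrt 5 * sqrt 5) * sqrt 5) by ring.
  rewrite sqrt5_sqr; unfold d4, W; field.
Qed.

Lemma vplus_d4 u : u ^ 2 <= sqrt 5 ->
  vplus d4 u = (sqrt 5 - u ^ 2) * sqrt (u ^ 2 + 2 * sqrt 5) / sqrt 15.
Proof.
  intros Hu; pose proof sqrt5_pos; pose proof sqrt15_pos.
  pose proof (sqrt_sqrt (u ^ 2 + 2 * sqrt 5) ltac:(nra)) as HR.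
  pose proof (sqrt_pos (u ^ 2 + 2 * sqrt 5)).
  pose proof (d4_sub_W u).
  assert (0 <= (sqrt 5 - u ^ 2) ^ 2 * (u ^ 2 + 2 * sqrt 5))
    by (apply Rmult_le_pos; [apply pow2_ge_0 | nra]).
  apply sqrt_lem_1.
  - lra.
  - apply Rmult_le_pos; [nra | left; apply Rinv_0_lt_compat; lra].
  - set (R := sqrt (u ^ 2 + 2 * sqrt 5)) in *.
    replace ((sqrt 5 - u ^ 2) * R / sqrt 15 * ((sqrt 5 - u ^ 2) * R / sqrt 15))
      with ((sqrt 5 - u ^ 2) ^ 2 * (R * R) / (sqrt 15 * sqrt 15)) by (field; lra).
    rewrite HR, sqrt15_sqr; lra.
Qed.

Definition arc_primitive (p : R -> R) (c u : R) : R :=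
  (p u * sqrt (u ^ 2 + 2 * sqrt 5) + c * ln (u + sqrt (u ^ 2 + 2 * sqrt 5))) / sqrt 15.

(* With [Q u = sqrt (u^2 + 2 sqrt 5)], the derivative of [p Q + c ln (u + Q)] is
   [(p' Q^2 + p u + c) / Q]; compare with [vplus_d4]. *)
Lemma is_derive_arc_primitive (p dp : R -> R) c k x : x ^ 2 <= sqrt 5 ->
  is_derive p x (dp x) ->
  dp x * (x ^ 2 + 2 * sqrt 5) + p x * x + c
    = x ^ k * (sqrt 5 - x ^ 2) * (x ^ 2 + 2 * sqrt 5) ->
  is_derive (arc_primitive p c) x (x ^ k * vplus d4 x).
Proof.
  intros Hx Hp Hid; pose proof sqrt5_pos; pose proof sqrt15_pos.
  rewrite vplus_d4 by assumption.
  assert (HX : 0 < x ^ 2 + 2 * sqrt 5) by nra.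
  pose proof (sqrt_sqrt _ (Rlt_le _ _ HX)) as HR.
  pose proof (sqrt_lt_R0 _ HX) as HRp.
  assert (Hs : 0 < x + sqrt (x ^ 2 + 2 * sqrt 5)) by nra.
  unfold arc_primitive; auto_derive.
  - repeat split; try (exists (dp x); exact Hp);
      replace (x * (x * 1)) with (x ^ 2) by ring; assumption.
  - match goal with |- context [Derive ?f x] => rewrite (is_derive_unique f x (dp x) Hp) end.
    replace (x * (x * 1)) with (x ^ 2) by ring.
    set (Q := sqrt (x ^ 2 + 2 * sqrt 5)) in *.
    rewrite <- HR in Hid.
    transitivity ((dp x * (Q * Q) + p x * x + c) / (Q * sqrt 15)); [field; lra|].
    rewrite Hid; field; lra.
Qed.

Lemma sqrt3_bounds : 1.7 < sqrt 3 < 1.75.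
Proof. pose proof (sqrt_sqrt 3 ltac:(lra)); pose proof (sqrt_pos 3); split; nra. Qed.

Lemma sqrt_u_saddle_radicand : sqrt (u_saddle ^ 2 + 2 * sqrt 5) = sqrt 3 * u_saddle.
Proof.
  pose proof u_saddle_pos; pose proof u_saddle_sqr.
  replace (u_saddle ^ 2 + 2 * sqrt 5) with (3 * u_saddle ^ 2) by (rewrite <- u_saddle_sqr; ring).
  rewrite sqrt_mult, sqrt_pow2 by (try apply pow2_ge_0; lra); reflexivity.
Qed.

Lemma arc_primitive_sub (p : R -> R) c : (forall u, p (- u) = - p u) ->
  arc_primitive p c u_saddle - arc_primitive p c (- u_saddle)
  = (2 * sqrt 3 * u_saddle * p u_saddle + c * ln (2 + sqrt 3)) / sqrt 15.
Proof.
  intros Hp; pose proof u_saddle_pos; pose proof sqrt3_bounds; pose proof sqrt15_pos.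
  unfold arc_primitive; replace ((- u_saddle) ^ 2) with (u_saddle ^ 2) by ring.
  rewrite sqrt_u_saddle_radicand, Hp.
  replace (ln (2 + sqrt 3)) with (ln (u_saddle + sqrt 3 * u_saddle) - ln (- u_saddle + sqrt 3 * u_saddle)).
  - field; lra.
  - rewrite <- ln_div by nra; f_equal.
    pose proof (sqrt_sqrt 3 ltac:(lra)); field_simplify_eq; nra.
Qed.

Lemma arc_moment_d4 (p dp : R -> R) c k :
  (forall x, is_derive p x (dp x)) -> (forall u, p (- u) = - p u) ->
  (forall x, dp x * (x ^ 2 + 2 * sqrt 5) + p x * x + c
               = x ^ k * (sqrt 5 - x ^ 2) * (x ^ 2 + 2 * sqrt 5)) ->
  arc_moment k d4 = (2 * sqrt 3 * u_saddle * p u_saddle + c * ln (2 + sqrt 3)) / sqrt 15.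
Proof.
  intros Hp Hodd Hid; pose proof u_saddle_pos; pose proof u_saddle_sqr.
  rewrite <- arc_primitive_sub by assumption.
  apply is_RInt_unique, (is_RInt_derive (V := R_CompleteNormedModule));
    intros x Hx; rewrite Rmin_left, Rmax_right in Hx by lra.
  - apply (is_derive_arc_primitive p dp); auto; simpl; nra.
  - apply (continuous_mult (fun u => u ^ k) (vplus d4));
      [apply continuous_pow | apply continuous_vplus].
Qed.

Lemma arc_moment0_d4 : arc_moment 0 d4 = 15 / 2 * ln (2 + sqrt 3) / sqrt 15.
Proof.
  rewrite (arc_moment_d4 (fun u => - u ^ 3 / 4 + sqrt 5 * u / 4)
             (fun u => - 3 * u ^ 2 / 4 + sqrt 5 / 4) (15 / 2)).
  - pose proof u_saddle_sqr; simpl; f_equal; nra.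
  - intros x; auto_derive; auto; field.
  - intros; field.
  - intros; pose proof sqrt5_sqr; simpl; nra.
Qed.

Lemma arc_moment4_d4 :
  arc_moment 4 d4 = (- 75 / 4 * sqrt 3 + 225 / 8 * ln (2 + sqrt 3)) / sqrt 15.
Proof.
  rewrite (arc_moment_d4
    (fun u => - u ^ 7 / 8 + sqrt 5 * u ^ 5 / 8 + 15 / 16 * u ^ 3 - 45 * sqrt 5 / 16 * u)
    (fun u => - 7 * u ^ 6 / 8 + 5 * sqrt 5 * u ^ 4 / 8 + 45 / 16 * u ^ 2 - 45 * sqrt 5 / 16)
    (225 / 8)).
  - pose proof sqrt5_sqr as H5; rewrite <- u_saddle_sqr in H5 |- *.
    set (a := u_saddle) in *.
    replace (-75 / 4 * sqrt 3) with (-15 / 4 * sqrt 3 * ((a * a) * (a * a))) by (rewrite H5; field).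
    unfold Rdiv; apply Rmult_eq_compat_r; field.
  - intros x; auto_derive; auto; field.
  - intros; field.
  - intros; pose proof sqrt5_sqr; simpl; nra.
Qed.

Lemma ln_2_add_sqrt3_bounds : 0 < ln (2 + sqrt 3) < 3 / 2.
Proof.
  pose proof sqrt3_bounds; split.
  - rewrite <- ln_1; apply ln_increasing; lra.
  - rewrite <- (ln_exp (3 / 2)); apply ln_increasing; [lra|].
    pose proof (exp_ge_taylor (3 / 2) 3 ltac:(lra)) as Htaylor.
    simpl in Htaylor; unfold Factorial.fact in Htaylor; simpl in Htaylor; lra.
Qed.

Lemma arc_moment0_d4_pos : 0 < arc_moment 0 d4.
Proof.
  rewrite arc_moment0_d4; pose proof ln_2_add_sqrt3_bounds; pose proof sqrt15_pos.
  apply Rdiv_lt_0_compat; lra.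
Qed.

Lemma moment_ratio_d4 :
  arc_moment 4 d4 / arc_moment 0 d4 = 15 / 4 - 5 * sqrt 3 / (2 * ln (2 + sqrt 3)).
Proof.
  rewrite arc_moment0_d4, arc_moment4_d4.
  pose proof ln_2_add_sqrt3_bounds; pose proof sqrt15_pos; field; lra.
Qed.

(* [2 - sqrt 3 = / (2 + sqrt 3)] and [26 - 15 sqrt 3 = (2 - sqrt 3)^3]. *)
Lemma B4_limit_eq : B4_limit = arc_moment 4 d4 / arc_moment 0 d4.
Proof.
  rewrite moment_ratio_d4; unfold B4_limit.
  pose proof sqrt3_bounds; pose proof ln_2_add_sqrt3_bounds.
  pose proof (sqrt_sqrt 3 ltac:(lra)).
  assert (Hinv : ln (2 - sqrt 3) = - ln (2 + sqrt 3)).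
  { rewrite <- ln_Rinv by lra; f_equal; field_simplify_eq; nra. }
  assert (Hcube : ln (26 - 15 * sqrt 3) = 3 * ln (2 - sqrt 3)).
  { replace (26 - 15 * sqrt 3) with ((2 - sqrt 3) ^ 3) by (simpl; nra).
    rewrite ln_pow by lra; simpl; ring. }
  rewrite Hcube, Hinv; field; lra.
Qed.

Lemma one_sub_B4_limit_neq0 : 1 - B4_limit <> 0.
Proof.
  rewrite B4_limit_eq, moment_ratio_d4.
  pose proof sqrt3_bounds; pose proof ln_2_add_sqrt3_bounds.
  assert (11 / 4 < 5 * sqrt 3 / (2 * ln (2 + sqrt 3))).
  { apply (Rmult_lt_reg_r (2 * ln (2 + sqrt 3))); [lra|].
    replace (5 * sqrt 3 / (2 * ln (2 + sqrt 3)) * (2 * ln (2 + sqrt 3))) with (5 * sqrt 3)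
      by (field; lra).
    nra. }
  lra.
Qed.

Lemma continuous_moment_ratio j k h0 : arc_moment k h0 <> 0 ->
  continuous (fun h => arc_moment j h / arc_moment k h) h0.
Proof.
  intros Hk; apply (continuous_mult (K := R_AbsRing) (arc_moment j) (fun h => / arc_moment k h)).
  - apply continuous_arc_moment.
  - apply continuous_Rinv_comp; [apply continuous_arc_moment | exact Hk].
Qed.

Lemma Btilde4_lim : filterlim Btilde4 (at_left d4) (locally B4_limit).
Proof.
  pose proof sqrt5_pos as Hd4.
  apply (filterlim_ext_loc (fun h => arc_moment 4 h / arc_moment 0 h)).
  - exists (mkposreal d4 ltac:(unfold d4; lra)); intros h Hh Hlt.
    change (Rabs (h - d4) < d4) in Hh; rewrite Rabs_left in Hh by lra.
    symmetry; apply Btilde4_moments; lra.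
  - rewrite B4_limit_eq.
    apply (filterlim_filter_le_1 (F := locally d4) _ (filter_le_within (fun h => h < d4))).
    exact (continuous_moment_ratio 4 0 d4 (Rgt_not_eq _ _ arc_moment0_d4_pos)).
Qed.

Theorem mainTheorem8 :
  filterlim Btilde4 (at_left d4) (locally B4_limit) /\
  filterlim c0 (at_left d4) (locally (1 / (1 - B4_limit))).
Proof.
  split; [exact Btilde4_lim|].
  apply (filterlim_comp _ _ _ Btilde4 (fun b => 1 / (1 - b)) _ _ _ Btilde4_lim).
  apply (ex_derive_continuous (fun b => 1 / (1 - b))); auto_derive.
  apply one_sub_B4_limit_neq0.
Qed.
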